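(* Let $q$ be a prime power, $n\ge 1$, and $1\le k\le n(q-1)$. Then $C_{n,k}^q$ is self-orthogonal (i.e. $C_{n,k}^q\subseteq (C_{n,k}^q)^\perp$) if and only if $1\le k\le \frac{n(q-1)}{2}$ and $2k\equiv 0\pmod{q-1}$. In particular, in that case $\operatorname{Hull}(C_{n,k}^q)=C_{n,k}^q$.
   Context: For a prime power $q$ and integers $n\ge 1$, $k\ge 0$, the projective Reed-Muller code $C_{n,k}^q\subseteq \mathbb{F}_q^N$, $N=\frac{q^{n+1}-1}{q-1}$, is defined as follows. For each point of $\mathbb{P}^n(\mathbb{F}_q)$ choose the affine representative $(p_0,\dots,p_n)\in\mathbb{F}_q^{n+1}\setminus\{0\}$ whose left-most nonzero coordinate equals $1$, and fix an ordering $P_1',\dots,P_N'$ of these representatives. Then $C_{n,k}^q=\{(F(P_1'),\dots,F(P_N')) : F\in \mathbb{F}_q[x_0,\dots,x_n]_k\}$, where $\mathbb{F}_q[x_0,\dots,x_n]_k$ is the space of homogeneous polynomials of degree $k$ together with $0$. Duals are taken with respect to the standard dot product on $\mathbb{F}_q^N$, and $\operatorname{Hull}(C)=C\cap C^\perp$. *)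

From HB Require Import structures.
From mathcomp Require Import all_boot all_order all_algebra all_field.
From mathcomp Require Import mpoly.
Set Implicit Arguments. Unset Strict Implicit. Unset Printing Implicit Defensive.
Import GRing.Theory.
Local Open Scope ring_scope.

Section ProjRM.
Variable F : finFieldType.

(* v is the normalized affine representative of a point of P^n(F):
   its left-most nonzero coordinate equals 1. *)
Definition normalized (n : nat) (v : 'I_n.+1 -> F) : bool :=
  [exists i : 'I_n.+1, (v i == 1) && [forall j : 'I_n.+1, (j < i)%N ==> (v j == 0)]].

Definition PPoint (n : nat) := {v : {ffun 'I_n.+1 -> F} | normalized v}.

Definition Nlen (n : nat) : nat := #|{: PPoint n}|.

Definition pt (n : nat) (i : 'I_(Nlen n)) : 'I_n.+1 -> F :=
  val (@enum_val (PPoint n) (mem predT) i).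

Definition evalvec (n : nat) (p : {mpoly F[n.+1]}) : 'rV[F]_(Nlen n) :=
  \row_(i < Nlen n) p.@[pt i].

(* The projective Reed-Muller code C_{n,k}^q (as a subset of F^N);
   homogeneous polynomials of degree k together with 0 (0 is k.-homog). *)
Definition PRM (n k : nat) : 'rV[F]_(Nlen n) -> Prop :=
  fun w => exists p : {mpoly F[n.+1]}, p \is k.-homog /\ w = evalvec p.

Definition dotp (N : nat) (u v : 'rV[F]_N) : F := \sum_(i < N) u 0 i * v 0 i.

Definition dual_code (N : nat) (C : 'rV[F]_N -> Prop) : 'rV[F]_N -> Prop :=
  fun w => forall c, C c -> dotp c w = 0.

Definition hull (N : nat) (C : 'rV[F]_N -> Prop) : 'rV[F]_N -> Prop :=
  fun w => C w /\ dual_code C w.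

Definition self_orthogonal (N : nat) (C : 'rV[F]_N -> Prop) : Prop :=
  forall w, C w -> dual_code C w.

End ProjRM.

(** The dot product of two codewords of C_{n,k} is the sum of a homogeneous
    polynomial P of degree 2k over the normalized representatives.  When
    q - 1 divides 2k, P(c v) = P(v) for every nonzero scalar c, so that sum is
    minus the sum of P over all of F^(n+1), which vanishes monomial by monomial
    as soon as 2k < (n+1)(q-1): a sum of x^m over F is nonzero only when m is a
    positive multiple of q - 1.  Conversely, if q - 1 does not divide 2k then
    x_n^k pairs nontrivially with itself, and if 2k > n(q-1) the monomial
    x_0^(q-1) ... x_(n-1)^(q-1) x_n^(2k - n(q-1)) splits into two monomials of
    degree k whose codewords are not orthogonal. *)

From HB Require Import structures.
From mathcomp Require Import all_boot all_order all_algebra all_fingroup.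
From mathcomp Require Import all_solvable all_field.
From mathcomp Require Import mpoly.
From mathcomp Require Import zify.
Set Implicit Arguments. Unset Strict Implicit. Unset Printing Implicit Defensive.
Import GRing.Theory.
Local Open Scope ring_scope.

Section FinFieldPowerSums.
Variable F : finFieldType.
Local Notation e := #|F|.-1.

Lemma card_finField_pred_gt0 : (0 < e)%N.
Proof. by case: #|F| (finNzRing_gt1 F) => [|[]]. Qed.

Lemma natr_card_finField : (#|F|%:R : F) = 0.
Proof.
have := @expg_cardG _ (setT_group F) (GRing.one F) (in_setT _).
by rewrite FinRing.zmodXgE cardsT.
Qed.

Lemma natr_card_finField_pred : (e%:R : F) = -1.
Proof.
apply/eqP; rewrite -subr_eq0 opprK natr1 prednK ?natr_card_finField //.
exact: ltnW (finNzRing_gt1 F).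
Qed.

Lemma expf_card_pred (x : F) : x != 0 -> x ^+ e = 1.
Proof.
move=> x_neq0; apply: (mulIf x_neq0).
by rewrite mul1r -exprSr prednK ?expf_card // ltnW // finNzRing_gt1.
Qed.

Lemma exists_expf_neq1 m : ~~ (e %| m)%N -> exists2 z : F, z != 0 & z ^+ m != 1.
Proof.
move=> ndvd; pose units := enum (predC1 (0 : F)).
have units_roots : all e.-unity_root units.
  by apply/allP => x; rewrite mem_enum unity_rootE => /expf_card_pred ->.
have size_units : (e <= size units)%N by rewrite -cardE cardC1.
have /hasP[z _ prim_z] :=
  has_prim_root card_finField_pred_gt0 units_roots (enum_uniq _) size_units.
exists z; last by rewrite -(prim_order_dvd prim_z).
by rewrite (prim_root_eq0 prim_z) -lt0n card_finField_pred_gt0.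
Qed.

Lemma mulr_fixed_eq0 (z s : F) : z != 1 -> z * s = s -> s = 0.
Proof.
move=> z_neq1 /eqP; rewrite -subr_eq0 -{2}(mul1r s) -mulrBl mulf_eq0 subr_eq0.
by rewrite (negbTE z_neq1) => /eqP.
Qed.

Lemma sum_units_expf d : (e %| d)%N -> \sum_(x : F | x != 0) x ^+ d = -1.
Proof.
move=> dvd; rewrite (eq_bigr (fun=> 1)) => [|x x_neq0]; last first.
  by rewrite -(divnK dvd) mulnC exprM expf_card_pred // expr1n.
by rewrite sumr_const cardC1 natr_card_finField_pred.
Qed.

Lemma sum_expf m :
  \sum_(x : F) x ^+ m = if (0 < m)%N && (e %| m)%N then -1 else 0.
Proof.
case: m => [|m] /=.
  by under eq_bigr do rewrite expr0; rewrite sumr_const natr_card_finField.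
have [dvd|ndvd] := boolP (e %| m.+1)%N.
  by rewrite (bigD1 0) //= expr0n add0r sum_units_expf.
have [z z_neq0 zm_neq1] := exists_expf_neq1 ndvd.
apply: (mulr_fixed_eq0 zm_neq1).
rewrite mulr_sumr [RHS](reindex_inj (mulfI z_neq0)) /=.
by apply: eq_bigr => x _; rewrite exprMn.
Qed.

End FinFieldPowerSums.

Lemma exists_lepm_mdeg N (a : 'X_{1..N}) d :
  (d <= mdeg a)%N -> exists2 b : 'X_{1..N}, (b <= a)%MM & mdeg b = d.
Proof.
elim: d => [|d IH] le_d.
  by exists 0%MM; [apply/mnm_lepP => i; rewrite mnm0E | exact: mdeg0].
have [b le_ba deg_b] := IH (ltnW le_d).
have [i lt_bai | le_ab] := pickP (fun i => b i < a i)%N; last first.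
  suff: (mdeg a <= mdeg b)%N by rewrite deg_b leqNgt le_d.
  by rewrite !mdegE; apply: leq_sum => i _; rewrite leqNgt le_ab.
exists (b + U_(i))%MM; last by rewrite mdegD mdeg1 deg_b addn1.
apply/mnm_lepP => j; rewrite mnmDE mnm1E; move/mnm_lepP/(_ j): le_ba.
by case: (eqVneq i j) => [<-|] /=; lia.
Qed.

Lemma meval_homog_scale (R : comNzRingType) N (p : {mpoly R[N]}) d c (v : 'I_N -> R) :
  p \is d.-homog -> p.@[fun i => c * v i] = c ^+ d * p.@[v].
Proof.
move=> /dhomogP homog_p; rewrite !mevalE mulr_sumr; apply: eq_big_seq => m m_supp.
rewrite mulrCA -(homog_p m m_supp); congr (_ * _).
by under eq_bigr do rewrite exprMn; rewrite big_split /= prodrXr mdegE.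
Qed.

Section AffineSums.
Variables (F : finFieldType) (N : nat).
Local Notation e := #|F|.-1.
Local Notation V := {ffun 'I_N -> F}.

Lemma sum_mevalX m : \sum_(v : V) 'X_[m].@[v] = \prod_i \sum_(x : F) x ^+ m i.
Proof. by rewrite bigA_distr_bigA; apply: eq_bigr => v _; rewrite mevalX. Qed.

Lemma sum_mevalX_eq0 m : (mdeg m < N * e)%N -> \sum_(v : V) 'X_[m].@[v] = 0.
Proof.
move=> small_m; rewrite sum_mevalX.
have [i not_mult | all_mult] := pickP (fun i => ~~ ((0 < m i) && (e %| m i)))%N.
  by rewrite (bigD1 i) //= sum_expf (negbTE not_mult) mul0r.
suff: (N * e <= mdeg m)%N by rewrite leqNgt small_m.
rewrite mdegE -{1}(card_ord N) -sum_nat_const; apply: leq_sum => i _.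
by move/negbFE/andP: (all_mult i) => [m_gt0 /dvdn_leq]; apply.
Qed.

Lemma sum_meval_eq0 (p : {mpoly F[N]}) :
  {in msupp p, forall m, mdeg m < N * e}%N -> \sum_(v : V) p.@[v] = 0.
Proof.
move=> small_p; under eq_bigr do rewrite mevalE.
under eq_bigr do under eq_bigr do rewrite -mevalX.
rewrite exchange_big big1_seq // => m /andP[_ m_supp].
by rewrite -mulr_sumr sum_mevalX_eq0 ?mulr0 ?small_p.
Qed.

End AffineSums.

Section Normalization.
Variables (F : finFieldType) (n : nat).
Local Notation V := {ffun 'I_n.+1 -> F}.
Implicit Types (v : V) (c : F).

Definition first_nz (v : V) (i : 'I_n.+1) : bool :=
  (v i != 0) && [forall j : 'I_n.+1, (j < i)%N ==> (v j == 0)].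

Lemma first_nz_uniq v i j : first_nz v i -> first_nz v j -> i = j.
Proof.
move=> /andP[vi_neq0 /forallP before_i] /andP[vj_neq0 /forallP before_j].
apply/val_inj; case: (ltngtP i j) => // [lt_ij|lt_ji].
- by move: (before_j i); rewrite lt_ij /= (negbTE vi_neq0).
- by move: (before_i j); rewrite lt_ji /= (negbTE vj_neq0).
Qed.

Lemma exists_first_nz v : v != 0 -> exists i, first_nz v i.
Proof.
move=> v_neq0; have [i0 vi0_neq0 | v_eq0] := pickP (fun i => v i != 0); last first.
  by case/eqP: v_neq0; apply/ffunP => i; rewrite ffunE; apply/eqP/negbFE.
have [i vi_neq0 min_i] :=
  @arg_minnP _ i0 (fun i => v i != 0) (fun i : 'I_n.+1 => nat_of_ord i) vi0_neq0.
exists i; rewrite /first_nz vi_neq0; apply/forallP => j; apply/implyP => lt_ji.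
by apply: contraTT lt_ji => /min_i; rewrite -leqNgt.
Qed.

Lemma normalizedP (v : V) : normalized v = [exists i, first_nz v i && (v i == 1)].
Proof.
apply/existsP/existsP => -[i /andP[]].
  by move=> /eqP vi1 before_i; exists i; rewrite /first_nz vi1 oner_neq0 before_i eqxx.
by move=> /andP[_ before_i] vi1; exists i; rewrite vi1.
Qed.

Definition lead_coord (v : V) : F :=
  if [pick i | first_nz v i] is Some i then v i else 1.

Lemma lead_coordE v i : first_nz v i -> lead_coord v = v i.
Proof.
rewrite /lead_coord => first_i; case: pickP => [j first_j|/(_ i)].
  by rewrite (first_nz_uniq first_j first_i).
by rewrite first_i.
Qed.

Lemma lead_coord_neq0 v : lead_coord v != 0.
Proof. by rewrite /lead_coord; case: pickP => [i /andP[]|_]; rewrite ?oner_neq0. Qed.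

Definition scalev (c : F) (v : V) : V := [ffun i => c * v i].

Lemma first_nz_scalev c v i : c != 0 -> first_nz (scalev c v) i = first_nz v i.
Proof.
move=> c_neq0; rewrite /first_nz ffunE mulf_eq0 negb_or c_neq0.
by congr (_ && _); apply: eq_forallb => j; rewrite ffunE mulf_eq0 (negbTE c_neq0).
Qed.

Lemma scalevK c : c != 0 -> cancel (scalev c) (scalev c^-1).
Proof. by move=> c_neq0 v; apply/ffunP => i; rewrite !ffunE mulKf. Qed.

Lemma scalevKV c : c != 0 -> cancel (scalev c^-1) (scalev c).
Proof. by move=> c_neq0 v; apply/ffunP => i; rewrite !ffunE mulVKf. Qed.

Lemma scalev_neq0 c v : c != 0 -> v != 0 -> scalev c v != 0.
Proof.
move=> c_neq0; apply: contraNneq => scv_eq0.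
by rewrite -(scalevK c_neq0 v) scv_eq0; apply/eqP/ffunP => i; rewrite !ffunE mulr0.
Qed.

Lemma normalized_neq0 v : normalized v -> v != 0.
Proof.
move=> /existsP[i /andP[/eqP vi1 _]]; apply: contra_eq_neq vi1 => ->.
by rewrite ffunE eq_sym oner_neq0.
Qed.

Lemma normalized_scalev_lead v : v != 0 -> normalized (scalev (lead_coord v)^-1 v).
Proof.
move=> v_neq0; have [i first_i] := exists_first_nz v_neq0.
rewrite normalizedP; apply/existsP; exists i.
rewrite first_nz_scalev ?invr_eq0 ?lead_coord_neq0 // first_i ffunE.
have vi_neq0 : v i != 0 by case/andP: first_i.
by rewrite (lead_coordE first_i) mulVf ?eqxx.
Qed.

Lemma lead_coord_scalev c v : c != 0 -> normalized v -> lead_coord (scalev c v) = c.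
Proof.
move=> c_neq0; rewrite normalizedP => /existsP[i /andP[first_i /eqP vi1]].
by rewrite (lead_coordE (_ : first_nz _ i)) ?first_nz_scalev // ffunE vi1 mulr1.
Qed.

Lemma sum_nonzero_scalev (G : V -> F) :
  \sum_(v : V | v != 0) G v =
  \sum_(c : F | c != 0) \sum_(v : V | normalized v) G (scalev c v).
Proof.
pose split_lead v := (lead_coord v, scalev (lead_coord v)^-1 v).
rewrite pair_big_dep (reindex_onto (fun cv => scalev cv.1 cv.2) split_lead) /=; last first.
  by move=> v _; rewrite scalevKV // lead_coord_neq0.
apply: eq_bigl => -[c v] /=; apply/andP/andP => [[scv_neq0 /eqP[lead_c <-]]|[c_neq0 norm_v]].
  by split; [rewrite -lead_c lead_coord_neq0 | exact: normalized_scalev_lead].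
by rewrite /split_lead lead_coord_scalev // scalevK // scalev_neq0 ?normalized_neq0.
Qed.

Lemma big_PPoint (G : V -> F) :
  \sum_(P : PPoint F n) G (val P) = \sum_(v : V | normalized v) G v.
Proof.
rewrite [RHS](reindex_omap (val : PPoint F n -> V) insub); last first.
  by move=> v norm_v; rewrite insubT.
by apply: eq_bigl => -[v norm_v] /=; rewrite insubT ?norm_v /= eqxx.
Qed.

End Normalization.

Section RepresentativeSums.
Variables (F : finFieldType) (n : nat).
Local Notation e := #|F|.-1.
Local Notation V := {ffun 'I_n.+1 -> F}.
Implicit Types (v : V) (c : F).

Definition sum_reps (p : {mpoly F[n.+1]}) : F := \sum_(v : V | normalized v) p.@[v].

Lemma dotp_evalvec (f g : {mpoly F[n.+1]}) :
  dotp (evalvec f) (evalvec g) = sum_reps (f * g).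
Proof.
rewrite /dotp /sum_reps -big_PPoint; under eq_bigr do rewrite !mxE -mevalM.
by rewrite /pt -(big_enum_val (fun P : PPoint F n => (f * g).@[val P])).
Qed.

Lemma meval_homog_scalev (p : {mpoly F[n.+1]}) d c (v : V) :
  p \is d.-homog -> p.@[scalev c v] = c ^+ d * p.@[v].
Proof.
move=> homog_p; rewrite -meval_homog_scale //.
by apply: meval_eq => i; rewrite ffunE.
Qed.

(** Each nonzero vector is uniquely c v with v normalized and c among the
    #|F| - 1 = -1 nonzero scalars. *)
Lemma sum_reps_homog (p : {mpoly F[n.+1]}) d :
  p \is d.-homog -> (0 < d)%N -> (e %| d)%N -> sum_reps p = - \sum_(v : V) p.@[v].
Proof.
move=> homog_p d_gt0 dvd.
have p_at0 : p.@[0 : V] = 0.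
  have -> : (0 : V) = scalev 0 0 by apply/ffunP => i; rewrite !ffunE mul0r.
  by rewrite (meval_homog_scalev _ _ homog_p) expr0n gtn_eqF // mul0r.
rewrite (bigD1 (0 : V)) //= p_at0 add0r sum_nonzero_scalev.
under eq_bigr do under eq_bigr do rewrite (meval_homog_scalev _ _ homog_p).
under eq_bigr do rewrite -mulr_sumr.
by rewrite -mulr_suml sum_units_expf // mulN1r opprK.
Qed.

Definition e_last : V := [ffun i => (i == ord_max)%:R].

Definition scale_last (c : F) (v : V) : V :=
  [ffun i => if i == ord_max then c * v i else v i].

Lemma normalized_e_last : normalized e_last.
Proof.
apply/existsP; exists ord_max; rewrite ffunE eqxx eqxx /=.
by apply/forallP => j; apply/implyP => lt_j; rewrite ffunE -val_eqE /= ltn_eqF.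
Qed.

Lemma scale_lastK c : c != 0 -> cancel (scale_last c) (scale_last c^-1).
Proof.
by move=> c_neq0 v; apply/ffunP => i; rewrite !ffunE; case: (i == ord_max); rewrite ?mulKf.
Qed.

Lemma normalized_scale_last c v : c != 0 -> normalized v -> v != e_last ->
  normalized (scale_last c v) && (scale_last c v != e_last).
Proof.
move=> c_neq0 /existsP[i /andP[/eqP vi1 /forallP before_i]] v_neq_e.
have before_max (j : 'I_n.+1) : j != ord_max -> (j < n)%N.
  by move: (ltn_ord j); rewrite -val_eqE /=; lia.
have i_neq_max : i != ord_max.
  apply: contraNneq v_neq_e => i_max; apply/eqP/ffunP => j; rewrite ffunE.
  have [->|j_neq_max] := eqVneq j ord_max; first by rewrite -i_max vi1.
  by apply/eqP; move/implyP: (before_i j); apply; rewrite i_max; exact: before_max.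
apply/andP; split.
  apply/existsP; exists i; rewrite ffunE (negbTE i_neq_max) vi1 eqxx /=.
  apply/forallP => j; apply/implyP => lt_ji; rewrite ffunE.
  have j_neq_max : j != ord_max.
    by apply: contraTneq lt_ji => ->; rewrite -leqNgt -ltnS.
  by rewrite (negbTE j_neq_max); move/implyP: (before_i j); apply.
apply/eqP => /(congr1 (fun w : V => w i)).
by rewrite !ffunE (negbTE i_neq_max) vi1 => /eqP; rewrite oner_eq0.
Qed.

(** Rescaling the last coordinate permutes the representatives other than
    e_last, so only e_last contributes to the sum. *)
Lemma sum_reps_Xlast d : ~~ (e %| d)%N -> sum_reps ('X_ord_max ^+ d) = 1.
Proof.
move=> ndvd; rewrite /sum_reps (eq_bigr (fun v => v ord_max ^+ d)) => [|v _]; last first.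
  by rewrite rmorphXn /= mevalXU.
rewrite (bigD1 e_last) ?normalized_e_last //= ffunE eqxx expr1n.
suff -> : \sum_(v : V | normalized v && (v != e_last)) v ord_max ^+ d = 0 by rewrite addr0.
have [z z_neq0 zd_neq1] := exists_expf_neq1 ndvd.
apply: (mulr_fixed_eq0 zd_neq1).
rewrite mulr_sumr [RHS](reindex_inj (can_inj (scale_lastK z_neq0))) /=.
apply: eq_big => [v|v _]; last by rewrite ffunE eqxx exprMn.
apply/idP/idP => /andP[norm_v v_neq_e]; first exact: normalized_scale_last.
by have := normalized_scale_last (invr_neq0 z_neq0) norm_v v_neq_e; rewrite scale_lastK.
Qed.

End RepresentativeSums.

Section SelfOrthogonality.
Variables (F : finFieldType) (n k : nat).
Local Notation e := #|F|.-1.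

Lemma self_orthogonal_PRMP :
  self_orthogonal (@PRM F n k) <->
  (forall f g : {mpoly F[n.+1]}, f \is k.-homog -> g \is k.-homog -> sum_reps (f * g) = 0).
Proof.
split=> [orth f g homog_f homog_g | orth _ [g [homog_g ->]] _ [f [homog_f ->]]].
  by rewrite -dotp_evalvec; apply: orth; [exists g | exists f].
by rewrite dotp_evalvec orth.
Qed.

Lemma self_orthogonal_PRM_dvd : self_orthogonal (@PRM F n k) -> (e %| 2 * k)%N.
Proof.
move/self_orthogonal_PRMP => orth; apply: contraT => ndvd.
have homog_Xk : ('X_ord_max ^+ k : {mpoly F[n.+1]}) \is k.-homog.
  by rewrite mpolyXn dhomogX; apply/eqP; rewrite /= mdegMn mdeg1 mul1n.
have := orth _ _ homog_Xk homog_Xk.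
by rewrite -exprD addnn -mul2n sum_reps_Xlast // => /eqP; rewrite oner_eq0.
Qed.

(** Witness: x_0^e ... x_(n-1)^e x_n^(2k - n e), split into two factors of degree k. *)
Lemma self_orthogonal_PRM_le :
  (0 < k)%N -> self_orthogonal (@PRM F n k) -> (2 * k <= n * e)%N.
Proof.
move=> k_gt0 orth; have dvd := self_orthogonal_PRM_dvd orth.
move/self_orthogonal_PRMP: orth => orth; rewrite leqNgt; apply/negP => big_k.
pose a := [multinom (if i == ord_max then 2 * k - n * e else e)%N | i < n.+1].
have deg_a : mdeg a = (2 * k)%N.
  rewrite mdegE big_ord_recr /= mnmE eqxx (eq_bigr (fun _ => e)) => [|i _]; last first.
    by rewrite mnmE -val_eqE /= ltn_eqF.
  by rewrite sum_nat_const card_ord subnKC // ltnW.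
have le_ka : (k <= mdeg a)%N by rewrite deg_a leq_pmull.
have [b le_ba deg_b] := exists_lepm_mdeg le_ka.
have deg_ab : mdeg (a - b)%MM = k.
  by apply/eqP; rewrite -(eqn_add2r (mdeg b)) -mdegD submK // deg_a deg_b addnn mul2n.
have homogX m d : mdeg m = d -> ('X_[m] : {mpoly F[n.+1]}) \is d.-homog.
  by move=> <-; rewrite dhomogX /=.
have := orth _ _ (homogX _ _ deg_ab) (homogX _ _ deg_b).
rewrite -mpolyXD submK // (sum_reps_homog (homogX _ _ deg_a)) ?muln_gt0 //.
rewrite sum_mevalX => /eqP; rewrite oppr_eq0; apply/negP/prodf_neq0 => i _.
rewrite sum_expf mnmE; case: (i == ord_max) => /=.
  have dvd_sub : (e %| 2 * k - n * e)%N by rewrite dvdn_sub // dvdn_mull.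
  by rewrite subn_gt0 big_k dvd_sub oppr_eq0 oner_neq0.
by rewrite card_finField_pred_gt0 dvdnn oppr_eq0 oner_neq0.
Qed.

Lemma PRM_self_orthogonal :
  (0 < k)%N -> (2 * k <= n * e)%N -> (e %| 2 * k)%N -> self_orthogonal (@PRM F n k).
Proof.
move=> k_gt0 le_k dvd; apply/self_orthogonal_PRMP => f g homog_f homog_g.
have homog_fg := dhomogM homog_f homog_g.
rewrite (sum_reps_homog homog_fg) ?addn_gt0 ?k_gt0 ?addnn -?mul2n //.
rewrite sum_meval_eq0 ?oppr0 // => m /(dhomog_mf homog_fg) /= ->.
by rewrite addnn -mul2n mulSn; exact: leq_add (card_finField_pred_gt0 F) le_k.
Qed.

End SelfOrthogonality.

Theorem mainTheorem5 (F : finFieldType) (n k : nat) :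
  (1 <= n)%N -> (1 <= k)%N -> (k <= n * (#|F| - 1))%N ->
  (self_orthogonal (@PRM F n k) <->
     ((1 <= k)%N /\ (2 * k <= n * (#|F| - 1))%N /\ (#|F| - 1 %| 2 * k)%N))
  /\ (self_orthogonal (@PRM F n k) ->
        forall w, hull (@PRM F n k) w <-> @PRM F n k w).
Proof.
move=> _ k_gt0 _; rewrite subn1; split.
  split=> [orth | [_ [le_k dvd]]]; last exact: PRM_self_orthogonal.
  split=> //; split; first exact: self_orthogonal_PRM_le k_gt0 orth.
  exact: self_orthogonal_PRM_dvd orth.
by move=> orth w; split=> [[] // | Cw]; split; last exact: orth.
Qed.
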